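(* Let $p$ be a prime, $d\geq 2$, let $X$ be the free abelian pro-$p$ group on $x_1,\ldots,x_d$, and let $R=\mathbb{Z}_p[[X]]$ be its completed group algebra over $\mathbb{Z}_p$. Let $\mathcal{C}\subseteq X^{(d)}$ denote the set of all bases $\mathbf{y}=(y_1,\ldots,y_d)$ of $X$. Then $$\bigcap_{\mathbf{y}\in\mathcal{C}}\big((y_1-1)R+\cdots+(y_{d-1}-1)R\big)=0.$$
   Context: A basis of the free abelian pro-$p$ group $X\cong\mathbb{Z}_p^{d}$ is a $d$-tuple $(y_1,\ldots,y_d)$ of elements of $X$ such that $X$ is the (internal) direct product of the procyclic subgroups $\overline{\langle y_i\rangle}\cong\mathbb{Z}_p$, equivalently a tuple topologically generating $X$. $\mathbb{Z}_p[[X]]=\varprojlim \mathbb{Z}_p/p^n[X/U]$ over open subgroups $U$ and $n$. *)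

From HB Require Import structures.
From mathcomp Require Import all_boot all_order all_algebra.
Set Implicit Arguments. Unset Strict Implicit. Unset Printing Implicit Defensive.
Import Order.TTheory GRing.Theory Num.Theory.
Local Open Scope ring_scope.

(* Level n (n : nat) of the inverse system corresponds to the modulus p^(n+1):
   the finite quotients Z/p^(n+1) of Z_p, and X/p^(n+1)X = (Z/p^(n+1))^d of
   X = Z_p^d (the subgroups p^(n+1) X are cofinal among open subgroups). *)
Definition lvl (p n : nat) : nat := (p ^ n.+1)%N.

Notation Zl p n := 'Z_(lvl p n).
Notation Gl p d n := 'rV['Z_(lvl p n)]_d.
(* Elements of the finite group algebra Z/p^(n+1) [ (Z/p^(n+1))^d ],
   as coefficient functions on the finite group. *)
Notation Al p d n := {ffun 'rV['Z_(lvl p n)]_d -> 'Z_(lvl p n)}.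

Definition prZ (p n : nat) (a : Zl p n.+1) : Zl p n := (val a)%:R.
Definition prG (p d n : nat) (v : Gl p d n.+1) : Gl p d n := map_mx (@prZ p n) v.
Definition prA (p d n : nat) (f : Al p d n.+1) : Al p d n :=
  [ffun g => \sum_(h : Gl p d n.+1 | prG h == g) prZ (f h)].

(* X = free abelian pro-p group Z_p^d, as the inverse limit of (Z/p^(n+1))^d *)
Definition X (p d : nat) :=
  { x : forall n, Gl p d n | forall n, prG (x n.+1) = x n }.

(* R = Z_p[[X]], as the inverse limit of the finite group algebras *)
Definition R (p d : nat) :=
  { f : forall n, Al p d n | forall n, prA (f n.+1) = f n }.

Definition conv (p d n : nat) (f g : Al p d n) : Al p d n :=
  [ffun x => \sum_(y : Gl p d n) f y * g (x - y)].

Definition ym1 (p d : nat) (y : X p d) (n : nat) : Al p d n :=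
  [ffun h => (h == proj1_sig y n)%:R - (h == 0)%:R].

(* a basis: a d-tuple topologically generating X, i.e. whose image generates
   every finite quotient X/p^(n+1)X *)
Definition is_basis (p d : nat) (y : 'I_d -> X p d) : Prop :=
  forall n (v : Gl p d n), exists c : 'I_d -> int,
    v = \sum_(i < d) (proj1_sig (y i) n) *~ c i.

(* f lies in the ideal (y_1 - 1)R + ... + (y_{d-1} - 1)R; equality in the
   inverse limit R is equality at every level, and ring operations of R are
   levelwise. *)
Definition in_ideal (p d : nat) (y : 'I_d -> X p d) (f : R p d) : Prop :=
  exists r : 'I_d.-1 -> R p d,
    forall n, proj1_sig f n =
      \sum_(i < d.-1) conv (ym1 (y (widen_ord (leq_pred d) i)) n) (proj1_sig (r i) n).

Definition R_is_zero (p d : nat) (f : R p d) : Prop :=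
  forall n, proj1_sig f n = 0.

(* An element f of the ideal (y_1 - 1, ..., y_{d-1} - 1) is killed by every functional
   h |-> w(h . v) on a finite quotient (Z/p^(m+1))^d, where v is a primitive vector
   orthogonal to y_1, ..., y_{d-1}; as the basis varies, v runs through all columns of
   all invertible matrices.  Pairing f with the indicator of a box
   {u : p^(a_i) | u_i for all i} then gives a sum S_a which is divisible by
   p^(m+1 - sum a): when a is supported on one coordinate S_a = 0, and otherwise
   p S_a is an integral combination of box sums of smaller total size, obtained by
   counting the solutions over F_p of a linear congruence in two coordinates.
   The coefficient of f at level n is the box sum with a = (n+1, ..., n+1) reduced
   mod p^(n+1), so it vanishes as soon as m + 1 - d (n+1) >= n + 1. *)

From HB Require Import structures.
From mathcomp Require Import all_boot all_algebra.
From mathcomp Require Import perm ring zify.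
Set Implicit Arguments. Unset Strict Implicit. Unset Printing Implicit Defensive.
Import GRing.Theory.
Local Open Scope ring_scope.

(* Via representatives in [0, q): a ring morphism when q = 0 in S, and the
   canonical lift when S = 'Z_r with q <= r. *)
Definition Zp_red (S : pzSemiRingType) (q : nat) (a : 'Z_q) : S := (a : nat)%:R.
Arguments Zp_red {S q}.

Section ZpRed.
Variables (q : nat) (S : comPzRingType).
Hypotheses (q_gt1 : (1 < q)%N) (qS0 : q%:R = 0 :> S).

Lemma Zp_red_nat n : Zp_red (n%:R : 'Z_q) = n%:R :> S.
Proof.
by rewrite /Zp_red val_Zp_nat // {2}(divn_eq n q) natrD natrM qS0 mulr0 add0r.
Qed.

Lemma Zp_red_is_nmod : nmod_morphism (@Zp_red S q).
Proof.
split => // x y.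
by rewrite -[x in LHS]natr_Zp -[y in LHS]natr_Zp -natrD Zp_red_nat natrD.
Qed.

Lemma Zp_red_is_monoid : monoid_morphism (@Zp_red S q).
Proof.
split; first by rewrite -[1 in LHS]/(1%:R) Zp_red_nat.
by move=> x y; rewrite -[x in LHS]natr_Zp -[y in LHS]natr_Zp -natrM Zp_red_nat natrM.
Qed.

HB.instance Definition _ := GRing.isNmodMorphism.Build _ _ _ Zp_red_is_nmod.
HB.instance Definition _ := GRing.isMonoidMorphism.Build _ _ _ Zp_red_is_monoid.

Lemma Zp_redM (x y : 'Z_q) : Zp_red (x * y) = Zp_red x * Zp_red y :> S.
Proof. exact: rmorphM. Qed.

Lemma Zp_red_sum (I : finType) (P : pred I) (F : I -> 'Z_q) :
  Zp_red (\sum_(i | P i) F i) = \sum_(i | P i) Zp_red (F i) :> S.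
Proof. exact: rmorph_sum. Qed.

Lemma det_map_Zp_red n (A : 'M['Z_q]_n) : \det (map_mx Zp_red A) = Zp_red (\det A) :> S.
Proof. exact: det_map_mx. Qed.

End ZpRed.

Section ZpResidues.
Variables (q e : nat).
Hypotheses (q_gt1 : (1 < q)%N) (e_dvd_q : (e %| q)%N).

Lemma val_Zp_nat_mod n : (nat_of_ord (n%:R : 'Z_q) = n %[mod e])%N.
Proof. by rewrite val_Zp_nat // modn_dvdm. Qed.

Lemma val_ZpD_mod (x y : 'Z_q) : (nat_of_ord (x + y)%R = x + y %[mod e])%N.
Proof. by rewrite -[x in LHS]natr_Zp -[y in LHS]natr_Zp -natrD val_Zp_nat_mod. Qed.

Lemma val_ZpM_mod (x y : 'Z_q) : (nat_of_ord (x * y)%R = x * y %[mod e])%N.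
Proof. by rewrite -[x in LHS]natr_Zp -[y in LHS]natr_Zp -natrM val_Zp_nat_mod. Qed.

Lemma val_ZpB_mod (x y : 'Z_q) : (nat_of_ord (x - y)%R + y = x %[mod e])%N.
Proof. by rewrite -val_ZpD_mod subrK. Qed.

End ZpResidues.

Lemma sum_delta_mull (T : finType) (S : pzSemiRingType) (a : T) (F : T -> S) :
  \sum_z (z == a)%:R * F z = F a.
Proof.
rewrite (bigD1 a) //= eqxx mul1r big1 ?addr0 // => z /negbTE ->.
by rewrite mul0r.
Qed.

Section PadicLevels.
Variable p : nat.
Hypothesis p_pr : prime p.

Lemma lvl_gt1 n : (1 < lvl p n)%N.
Proof. by rewrite /lvl -{1}(expn0 p) ltn_exp2l ?prime_gt1. Qed.

Lemma val_lt_lvl n (x : 'Z_(lvl p n)) : (x < lvl p n)%N.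
Proof. by rewrite -[X in (_ < X)%N](Zp_cast (lvl_gt1 n)) ltn_ord. Qed.

Lemma pow_dvdn_lvl e m : (e <= m.+1)%N -> (p ^ e %| lvl p m)%N.
Proof. exact: dvdn_exp2l. Qed.

Lemma lvl_Zp0 n m : (n <= m)%N -> (lvl p m)%:R = 0 :> 'Z_(lvl p n).
Proof. by move=> le_nm; rewrite -Zp_nat_mod ?lvl_gt1 // (eqP (pow_dvdn_lvl _)). Qed.

Lemma lvl_Fp0 m : (lvl p m)%:R = 0 :> 'F_p.
Proof. by rewrite natrX pchar_Fp_0 // expr0n. Qed.

Lemma prZE n (a : 'Z_(lvl p n.+1)) : prZ a = Zp_red a.
Proof. by []. Qed.

Lemma unitmx_Fp k n (A : 'M['Z_(lvl p k)]_n) :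
  (A \in unitmx) = (map_mx Zp_red A \in (unitmx : pred 'M['F_p]_n)).
Proof.
rewrite !unitmxE det_map_Zp_red ?lvl_gt1 ?lvl_Fp0 //.
rewrite /Zp_red unitFpE // -[\det A in LHS]natr_Zp unitZpE ?lvl_gt1 //.
by rewrite /lvl coprime_pexpl.
Qed.

Lemma Fp_nat_eq a b : ((a%:R : 'F_p) == b%:R) = (a == b %[mod p])%N.
Proof.
apply/eqP/eqP => [|eq_ab]; last by rewrite -Fp_nat_mod // eq_ab Fp_nat_mod.
by rewrite -!val_Fp_nat // => ->.
Qed.

Lemma count_Fp_mul_eq (x z : nat) :
  (\sum_(c : 'F_p) (c * x == z %[mod p]) =
    if p %| x then (if p %| z then p else 0) else 1)%N.
Proof.
under eq_bigr => c _ do rewrite -Fp_nat_eq natrM natr_Zp.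
have [p_dvd_x | p_ndvd_x] := boolP (p %| x)%N.
  have -> : x%:R = 0 :> 'F_p by rewrite -Fp_nat_mod // (eqP p_dvd_x).
  under eq_bigr => c _ do rewrite mulr0 -[0 : 'F_p]/(0%:R) Fp_nat_eq mod0n eq_sym.
  by rewrite sum_nat_const card_Fp // /dvdn; case: eqP; rewrite ?muln1 ?muln0.
have x_neq0 : x%:R != 0 :> 'F_p by rewrite -[0 : 'F_p]/(0%:R) Fp_nat_eq mod0n.
rewrite (bigD1 (z%:R / x%:R)) //= divfK // eqxx big1 ?addn0 // => c.
by move=> c_neq; case: eqP => // cx_z; move: c_neq; rewrite -cx_z mulfK ?eqxx.
Qed.

(* The two-coordinate case of [box_indicator_identity] below. *)
Lemma dvdn_pair_count ej ek uj uk : (ej <= ek)%N ->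
  (p * ((p ^ ej.+1 %| uj) && (p ^ ek.+1 %| uk)) + ((p ^ ej %| uj) && (p ^ ek %| uk)) =
   \sum_(c : 'F_p) ((p ^ ej %| uj) && (c * p ^ (ek - ej) * uj == uk %[mod p ^ ek.+1]))
   + ((p ^ ej.+1 %| uj) && (p ^ ek %| uk)))%N.
Proof.
move=> le_jk; have p_gt0 := prime_gt0 p_pr.
have dvd_pS e u : (p ^ e.+1 %| u -> p ^ e %| u)%N by apply: dvdn_trans; rewrite dvdn_exp2l.
have [/dvdnP[x ->] | ndvd_j] := boolP (p ^ ej %| uj)%N; last first.
  by rewrite big1 // (contraNF (dvd_pS _ _) ndvd_j) muln0.
rewrite expnS dvdn_pmul2r ?expn_gt0 ?p_gt0 //=.
have shift (c : 'F_p) : (c * p ^ (ek - ej) * (x * p ^ ej) = c * x * p ^ ek)%N.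
  by rewrite -{2}(subnK le_jk) expnD; ring.
under eq_bigr => c _ do rewrite shift.
have [/dvdnP[z ->] | ndvd_k] := boolP (p ^ ek %| uk)%N; last first.
  rewrite (contraNF (dvd_pS _ _) ndvd_k) andbF muln0 big1 // => c _.
  case: eqP => // cx_uk; case/negP: ndvd_k.
  have dvd_S : (p ^ ek %| p ^ ek.+1)%N by rewrite dvdn_exp2l.
  by rewrite /dvdn -(modn_dvdm uk dvd_S) -cx_uk modn_dvdm // modnMl.
rewrite expnS dvdn_pmul2r ?expn_gt0 ?p_gt0 //.
under eq_bigr => c _ do rewrite -!muln_modl ?expn_gt0 ?p_gt0 // eqn_pmul2r ?expn_gt0 ?p_gt0 //.
rewrite count_Fp_mul_eq.
by case: (p %| x)%N; case: (p %| z)%N; rewrite ?muln1 ?muln0.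
Qed.

Variable d : nat.

Lemma R_fibre_sum (f : R p d) n m (g : Gl p d n) : (n <= m)%N ->
  sval f n g = \sum_(h : Gl p d m | map_mx Zp_red h == g) Zp_red (sval f m h).
Proof.
move/subnK <-; elim: (m - n)%N => [|k IH].
  rewrite (big_pred1 g) => [|h /=]; first by rewrite [RHS]natr_Zp.
  by rewrite map_mx_id // => a; rewrite /Zp_red natr_Zp.
have red_prG (h : Gl p d (k + n).+1) :
    map_mx Zp_red (prG h) = map_mx Zp_red h :> Gl p d n.
  by apply/matrixP => i j; rewrite !mxE prZE Zp_red_nat ?lvl_gt1 ?lvl_Zp0 ?leq_addl.
rewrite IH addSn (partition_big (@prG p d (k + n)) (fun h => map_mx Zp_red h == g)).
  apply: eq_bigr => h /eqP red_h.
  rewrite -(svalP f) ffunE Zp_red_sum ?lvl_gt1 ?lvl_Zp0 ?leq_addl //.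
  apply: eq_big => [h'|h' _]; last by rewrite prZE Zp_red_nat ?lvl_gt1 ?lvl_Zp0 ?leq_addl.
  by apply/esym/andb_idl => /eqP prG_h; rewrite -red_h -prG_h red_prG.
by move=> h' /=; rewrite red_prG.
Qed.

Section RowBases.
Variable m : nat.

Lemma row_lift_coherent (C : 'M['Z_(lvl p m)]_d) (l : 'I_d) n :
  prG (row l (map_mx Zp_red C : 'M['Z_(lvl p n.+1)]_d)) = row l (map_mx Zp_red C).
Proof.
by apply/matrixP => i i'; rewrite !mxE prZE Zp_red_nat ?lvl_gt1 ?lvl_Zp0.
Qed.

Definition X_row (C : 'M['Z_(lvl p m)]_d) (l : 'I_d) : X p d :=
  exist _ (fun n => row l (map_mx Zp_red C)) (row_lift_coherent C l).

Lemma X_row_top (C : 'M['Z_(lvl p m)]_d) l : sval (X_row C l) m = row l C.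
Proof. by rewrite /= map_mx_id // => a; rewrite /Zp_red natr_Zp. Qed.

Lemma is_basis_X_rows (C : 'M['Z_(lvl p m)]_d) (s : 'S_d) :
  C \in unitmx -> is_basis (fun i => X_row C (s i)).
Proof.
move=> C_unit n v; set Cn : 'M['Z_(lvl p n)]_d := map_mx Zp_red C.
have Cn_unit : Cn \in unitmx.
  rewrite unitmx_Fp -map_mx_comp (eq_map_mx Zp_red) -?unitmx_Fp // => a.
  by rewrite /= Zp_red_nat ?lvl_gt1 ?lvl_Fp0.
set w := v *m invmx Cn; exists (fun i => Posz (w 0 (s i))).
rewrite -[v](mulmxKV Cn_unit) -/w mulmx_sum_row (reindex_inj (@perm_inj _ s)).
by apply: eq_bigr => i _; rewrite -pmulrn -scaler_nat natr_Zp.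
Qed.

End RowBases.

Lemma conv_ym1_orthogonal (y : X p d) n (g : Al p d n) (chi : Gl p d n -> Zl p n) :
  (forall h, chi (h + sval y n) = chi h) ->
  \sum_h conv (ym1 y n) g h * chi h = 0.
Proof.
move=> chi_inv.
have conv_ym1 h : conv (ym1 y n) g h = g (h - sval y n) - g h.
  rewrite ffunE; under eq_bigr => z _ do rewrite ffunE mulrBl.
  by rewrite sumrB !sum_delta_mull subr0.
under eq_bigr => h _ do rewrite conv_ym1 mulrBl.
rewrite sumrB (reindex_inj (addIr (sval y n))) /=.
by apply/eqP; rewrite subr_eq0; apply/eqP/eq_bigr => h _; rewrite addrK chi_inv.
Qed.

(* Column j of an invertible B is a primitive vector, and every primitive vector arises so. *)
Definition coord_orthogonal m (F : Gl p d m -> Zl p m) :=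
  forall B : 'M['Z_(lvl p m)]_d, B \in unitmx -> forall (j : 'I_d) (w : Zl p m -> Zl p m),
    \sum_h F h * w ((h *m B) 0 j) = 0.

Lemma coord_orthogonal_of_ideal (f : R p d) :
  (forall y, is_basis y -> in_ideal y f) -> forall m, coord_orthogonal (sval f m).
Proof.
move=> f_in m B B_unit j w.
have last_lt : (d.-1 < d)%N by rewrite ltn_predL; apply: leq_ltn_trans (ltn_ord j).
pose last_d := Ordinal last_lt.
pose y i := X_row (invmx B) (tperm j last_d i).
have invB_unit : invmx B \in unitmx by rewrite unitmx_inv.
have [r ->] := f_in y (is_basis_X_rows (tperm j last_d) invB_unit).
under eq_bigr => h _ do rewrite sum_ffunE mulr_suml.
rewrite exchange_big /=; apply: big1 => i _; apply: conv_ym1_orthogonal => h.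
rewrite /y X_row_top mulmxDl -row_mul mulVmx // !mxE.
suff /negbTE -> : tperm j last_d (widen_ord (leq_pred d) i) != j by rewrite addr0.
rewrite -{2}(tpermR j last_d) (inj_eq (@perm_inj _ _)) -val_eqE /=.
by rewrite neq_ltn ltn_ord.
Qed.

Section Boxes.
Variable m : nat.

Local Notation Z := 'Z_(lvl p m).

Definition p_dvd e (x : Z) := (p ^ e %| x)%N.

Lemma p_dvd0 e : p_dvd e 0.
Proof. exact: dvdn0. Qed.

Lemma p_dvd_exp0 x : p_dvd 0 x.
Proof. exact: dvd1n. Qed.

Lemma p_dvd_le e e' x : (e' <= e)%N -> p_dvd e x -> p_dvd e' x.
Proof. by move=> le_e; apply: dvdn_trans; rewrite dvdn_exp2l. Qed.

Lemma p_dvd_sub e (x y : Z) : (e <= m.+1)%N ->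
  p_dvd e (x - y) = (y == x %[mod p ^ e])%N.
Proof.
move=> le_e; rewrite /p_dvd /dvdn -[0%N](mod0n (p ^ e)) -(eqn_modDr y) add0n.
by rewrite (val_ZpB_mod (lvl_gt1 m) (pow_dvdn_lvl le_e)) eq_sym.
Qed.

Lemma p_dvdD e (x y : Z) : (e <= m.+1)%N -> p_dvd e x -> p_dvd e y -> p_dvd e (x + y).
Proof.
rewrite /p_dvd /dvdn => le_e /eqP x0 /eqP y0.
by rewrite (val_ZpD_mod (lvl_gt1 m) (pow_dvdn_lvl le_e)) -modnDm x0 y0 mod0n.
Qed.

Lemma p_dvdB e (x y : Z) : (e <= m.+1)%N -> p_dvd e x -> p_dvd e y -> p_dvd e (x - y).
Proof. by move=> le_e; rewrite p_dvd_sub // /p_dvd /dvdn => /eqP -> /eqP ->. Qed.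

Lemma p_dvd_sum e (I : finType) (F : I -> Z) : (e <= m.+1)%N ->
  (forall i, p_dvd e (F i)) -> p_dvd e (\sum_i F i).
Proof.
move=> le_e F_dvd; apply: (big_ind (p_dvd e)) => //; first exact: p_dvd0.
by move=> x y; apply: p_dvdD.
Qed.

Lemma p_dvd_pmul e (x : Z) : (e < m.+1)%N -> p_dvd e.+1 (p%:R * x) -> p_dvd e x.
Proof.
move=> lt_e; have dvd_lvl := pow_dvdn_lvl lt_e.
rewrite /p_dvd /dvdn (val_ZpM_mod (lvl_gt1 m) dvd_lvl) -modnMml.
rewrite (val_Zp_nat_mod (lvl_gt1 m) dvd_lvl) modnMml -/(dvdn _ _).
by rewrite expnS dvdn_pmul2l ?prime_gt0.
Qed.

Definition in_box (a : 'I_d -> nat) (u : 'rV[Z]_d) := [forall i, p_dvd (a i) (u 0 i)].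

Definition decr (a : 'I_d -> nat) j i := if i == j then (a i).-1 else a i.

Definition transvection j k (c : nat) : 'M[Z]_d := 1%:M - c%:R *: delta_mx j k.

Lemma row_transvection j k c (u : 'rV[Z]_d) i : j != k ->
  (u *m transvection j k c) 0 i = if i == k then u 0 k - c%:R * u 0 j else u 0 i.
Proof.
move=> neq_jk; rewrite mulmxBr mulmx1 -scalemxAr !mxE (bigD1 j) //= big1.
  rewrite mxE eqxx /= addr0.
  by case: eqP => [->|_]; rewrite ?mulr1 ?mulr0 ?subr0 // mulrC.
by move=> l /negbTE l_neq; rewrite mxE l_neq mulr0.
Qed.

Lemma transvection_unit j k c : j != k -> transvection j k c \in unitmx.
Proof.
move=> neq_jk.
suff /mulmx1_unit[] : transvection j k c *m (1%:M + c%:R *: delta_mx j k) = 1%:M by [].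
rewrite mulmxDr mulmx1 mulmxBl mul1mx -!scalemxAr -!scalemxAl mul_delta_mx_cond.
by rewrite eq_sym (negbTE neq_jk) mulr0n !scaler0 subr0 subrK.
Qed.

Section BoxIdentity.
Variables (a : 'I_d -> nat) (j k : 'I_d).
Hypotheses (neq_jk : j != k) (aj_gt0 : (0 < a j)%N) (le_ajk : (a j <= a k)%N)
  (ak_le : (a k <= m.+1)%N).

Let off_jk (u : 'rV[Z]_d) := [forall i, (i != j) && (i != k) ==> p_dvd (a i) (u 0 i)].

Let in_box_jk (b : 'I_d -> nat) u : (forall i, i != j -> i != k -> b i = a i) ->
  in_box b u = [&& off_jk u, p_dvd (b j) (u 0 j) & p_dvd (b k) (u 0 k)].
Proof.
move=> b_off; apply/forallP/and3P => [u_in|[u_off uj uk] i].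
  split => //; apply/forallP => i; apply/implyP => /andP[ij ik].
  by rewrite -(b_off i ij ik).
case: (eqVneq i j) => [->|ij] //; case: (eqVneq i k) => [->|ik] //.
by rewrite b_off //; move/forallP/(_ i): u_off; rewrite ij ik.
Qed.

Lemma box_indicator_identity u :
  (p * in_box a u + in_box (decr (decr a j) k) u =
   \sum_(c : 'F_p) in_box (decr a j) (u *m transvection j k (c * p ^ (a k - a j)))
   + in_box (decr a k) u)%N.
Proof.
have neq_kj : k != j by rewrite eq_sym.
have off_tr c : off_jk (u *m transvection j k c) = off_jk u.
  apply: eq_forallb => i; rewrite row_transvection //.
  by case: (eqVneq i k) => [->|]; rewrite ?eqxx ?andbF.
have box_tr c : in_box (decr a j) (u *m transvection j k c) =
    [&& off_jk u, p_dvd (a j).-1 (u 0 j) & (c * u 0%R j == u 0%R k %[mod p ^ a k])%N].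
  rewrite (in_box_jk (b := decr a j)) => [|i ij _]; last by rewrite /decr (negbTE ij).
  rewrite off_tr !row_transvection // eqxx /decr eqxx (negbTE neq_kj) p_dvd_sub //.
  rewrite (val_ZpM_mod (lvl_gt1 m) (pow_dvdn_lvl ak_le)) -modnMml.
  by rewrite (val_Zp_nat_mod (lvl_gt1 m) (pow_dvdn_lvl ak_le)) modnMml (negbTE neq_jk).
under eq_bigr => c _ do rewrite box_tr.
rewrite (in_box_jk (b := a)) // (in_box_jk (b := decr (decr a j) k)) => [|i ij ik].
  rewrite (in_box_jk (b := decr a k)) => [|i _ ik]; last by rewrite /decr (negbTE ik).
  rewrite /decr eqxx (negbTE neq_kj) (negbTE neq_jk) eqxx.
  case: (off_jk u); last by rewrite big1 // muln0.
  rewrite /p_dvd -(prednK aj_gt0) -(prednK (leq_trans aj_gt0 le_ajk)) /= subSS.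
  by apply: dvdn_pair_count; rewrite -ltnS !prednK // (leq_trans aj_gt0 le_ajk).
by rewrite /decr (negbTE ij) (negbTE ik).
Qed.

End BoxIdentity.

Section BoxSums.
Hypothesis d_gt0 : (0 < d)%N.
Variable F : Gl p d m -> Z.
Hypothesis F_orth : coord_orthogonal F.

Definition box_sum (A : 'M[Z]_d) (a : 'I_d -> nat) (t : 'rV[Z]_d) :=
  \sum_h F h * (in_box a (h *m A - t))%:R.

Lemma box_sum_step (A : 'M[Z]_d) (a : 'I_d -> nat) (j k : 'I_d) (t : 'rV[Z]_d) :
    j != k -> (0 < a j)%N -> (a j <= a k)%N -> (a k <= m.+1)%N ->
  let tr (c : nat) := transvection j k (c * p ^ (a k - a j)) in
  p%:R * box_sum A a t + box_sum A (decr (decr a j) k) t =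
  \sum_(c : 'F_p) box_sum (A *m tr c) (decr a j) (t *m tr c) + box_sum A (decr a k) t.
Proof.
move=> neq_jk aj_gt0 le_ajk ak_le tr.
rewrite /box_sum mulr_sumr -big_split exchange_big /= -big_split /=.
apply: eq_bigr => h _; rewrite -mulr_sumr mulrCA -!mulrDr -natrM -natrD -natr_sum -natrD.
under eq_bigr => c _ do rewrite mulmxA -mulmxBl.
by rewrite box_indicator_identity.
Qed.

Lemma box_sum_single (A : 'M[Z]_d) (a : 'I_d -> nat) (k : 'I_d) (t : 'rV[Z]_d) :
  A \in unitmx -> (forall i, i != k -> a i = 0%N) -> box_sum A a t = 0.
Proof.
move=> A_unit a_k; rewrite -(F_orth A_unit k (fun y => (p_dvd (a k) (y - t 0 k))%:R)).
apply: eq_bigr => h _; congr (_ * (nat_of_bool _)%:R).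
apply/forallP/idP => [/(_ k)|box_k i]; first by rewrite !mxE.
case: (eqVneq i k) => [->|ik]; last by rewrite a_k // p_dvd_exp0.
by move: box_k; rewrite !mxE.
Qed.

Lemma sum_decr (a : 'I_d -> nat) j : (0 < a j)%N -> (\sum_i decr a j i).+1 = \sum_i a i.
Proof.
move=> aj_gt0; rewrite [RHS](bigD1 j) //= [in LHS](bigD1 j) //= /decr eqxx.
by rewrite -addSn prednK //; congr (_ + _)%N; apply: eq_bigr => i /negbTE ->.
Qed.

Lemma decr_le (a : 'I_d -> nat) j i : (decr a j i <= a i)%N.
Proof. by rewrite /decr; case: (i == j); rewrite ?leq_pred. Qed.

Theorem box_sum_dvd (a : 'I_d -> nat) (A : 'M[Z]_d) (t : 'rV[Z]_d) :
  (forall i, a i <= m.+1)%N -> A \in unitmx -> p_dvd (m.+1 - \sum_i a i) (box_sum A a t).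
Proof.
move sum_a: (\sum_i a i)%N => N.
elim/ltn_ind: N a A t sum_a => N IH a A t sum_a a_le A_unit.
(* k maximal, so that a j <= a k as [box_sum_step] requires. *)
pose k := [arg max_(i > Ordinal d_gt0) a i]%N.
have k_max i : (a i <= a k)%N by rewrite /k; case: arg_maxnP => // k0 _; apply.
case: (pickP (fun j => (j != k) && (0 < a j)%N)) => [j /andP[neq_jk aj_gt0] | no_j]; last first.
  rewrite (box_sum_single (k := k)) ?p_dvd0 // => i ik.
  by move: (no_j i); rewrite /= ik; case: (a i).
have [|N_le_m] := leqP m.+1 N; first by rewrite -subn_eq0 => /eqP ->; apply: p_dvd_exp0.
have N_gt0 : (0 < N)%N by rewrite -sum_a (bigD1 j) //= ltn_addr.
have ak_gt0 := leq_trans aj_gt0 (k_max j).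
have IH' (b : 'I_d -> nat) B s : (\sum_i b i < N)%N -> (forall i, b i <= a i)%N ->
    B \in unitmx -> p_dvd (m.+1 - N).+1 (box_sum B b s).
  move=> lt_bN le_ba B_unit; apply: p_dvd_le (IH _ lt_bN _ _ _ erefl _ B_unit); first lia.
  by move=> i; apply: leq_trans (le_ba i) (a_le i).
apply: p_dvd_pmul; first lia.
rewrite -[_ * _](addrK (box_sum A (decr (decr a j) k) t)) box_sum_step //.
apply: p_dvdB; [lia | apply: p_dvdD; [lia | apply: p_dvd_sum => [|c] | ] | ].
- lia.
- apply: IH'; [by rewrite -sum_a -(sum_decr aj_gt0) | exact: decr_le |].
  by rewrite unitmx_mul A_unit transvection_unit.
- by apply: IH' => //; [rewrite -sum_a -(sum_decr ak_gt0) | exact: decr_le].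
apply: IH' => //; last by move=> i; apply: leq_trans (decr_le _ _ _) (decr_le _ _ _).
have decr_k : (0 < decr a j k)%N by rewrite /decr eq_sym (negbTE neq_jk).
by rewrite -sum_a -(sum_decr aj_gt0) -(sum_decr decr_k).
Qed.

End BoxSums.

Section Fibres.
Variable n : nat.
Hypothesis le_nm : (n <= m)%N.

Lemma Zp_red_eq_p_dvd (x : Z) (y : 'Z_(lvl p n)) :
  (Zp_red x == y) = p_dvd n.+1 (x - Zp_red y).
Proof.
have lvl_nm : (lvl p n <= lvl p m)%N by rewrite leq_exp2l ?prime_gt1.
rewrite p_dvd_sub // /Zp_red !val_Zp_nat ?lvl_gt1 //.
rewrite (modn_small (leq_trans (val_lt_lvl y) lvl_nm)) -val_eqE /= val_Zp_nat ?lvl_gt1 //.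
by rewrite eq_sym (modn_small (val_lt_lvl y)).
Qed.

Lemma fibre_sum_box (F : Gl p d m -> Z) (g : Gl p d n) :
  \sum_(h : Gl p d m | map_mx Zp_red h == g) Zp_red (F h) =
  Zp_red (box_sum F 1%:M (fun _ => n.+1) (map_mx Zp_red g)) :> 'Z_(lvl p n).
Proof.
have [lvl_m_gt1 lvl_m0] := (lvl_gt1 m, lvl_Zp0 le_nm).
rewrite /box_sum (Zp_red_sum lvl_m_gt1 lvl_m0) big_mkcond /=.
apply: eq_bigr => h _; rewrite (Zp_redM lvl_m_gt1 lvl_m0) (Zp_red_nat lvl_m_gt1 lvl_m0).
have -> : in_box (fun _ => n.+1) (h *m 1%:M - map_mx Zp_red g) = (map_mx Zp_red h == g).
  rewrite mulmx1; apply/forallP/eqP => [in_g|<- i]; last by rewrite !mxE -Zp_red_eq_p_dvd.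
  apply/matrixP => i' i; rewrite (ord1 i') mxE; apply/eqP.
  by rewrite Zp_red_eq_p_dvd; move: (in_g i); rewrite !mxE.
by case: (_ == g); rewrite ?mulr1 ?mulr0.
Qed.

End Fibres.

End Boxes.

End PadicLevels.

Theorem corollary7 (p d : nat) (hp : prime p) (hd : (2 <= d)%N) (f : R p d) :
  (forall y : 'I_d -> X p d, is_basis y -> in_ideal y f) -> R_is_zero f.
Proof.
move=> f_in n; apply/ffunP => g; rewrite ffunE.
pose m := (d.+1 * n.+1)%N.
have le_nm : (n <= m)%N by rewrite /m; nia.
rewrite (R_fibre_sum hp f g le_nm) (fibre_sum_box hp le_nm); apply/eqP.
rewrite Zp_red_eq_p_dvd // [Zp_red _]/Zp_red subr0.
have F_orth := coord_orthogonal_of_ideal hp f_in (m := m).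
apply: p_dvd_le (box_sum_dvd hp (ltnW hd) F_orth (map_mx Zp_red g) _ (unitmx1 _ _)).
  by rewrite sum_nat_const card_ord /m; nia.
by move=> i; rewrite /m; nia.
Qed.
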